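(* Let $x_1,\dots,x_k\ge0$ be real numbers and let $2n$ be a nonnegative even integer. Then $$\sum_{2m_1+\cdots+2m_k=2n}\binom{2n}{2m_1,\dots,2m_k}x_1^{2m_1}\cdots x_k^{2m_k}\ \ge\ \frac{1}{2^{k-1}}\Big(\sum_{i=1}^kx_i\Big)^{2n},$$ where the sum is over all $k$-tuples of nonnegative integers $(m_1,\dots,m_k)$ with $2m_1+\cdots+2m_k=2n$. *)

From mathcomp Require Import all_boot all_order all_algebra.
Set Implicit Arguments. Unset Strict Implicit. Unset Printing Implicit Defensive.

(* Multinomial coefficient  (N choose a_1,...,a_k) = N! / (a_1! ... a_k!),
   meaningful when a_1 + ... + a_k = N (which is how it is used). *)
Definition multinomial (k N : nat) (a : 'I_k -> nat) : nat :=
  N`! %/ \prod_(i < k) (a i)`!.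

From mathcomp Require Import all_boot all_order all_algebra.
From mathcomp.algebra_tactics Require Import ring.
Import Order.TTheory GRing.Theory Num.Theory.
Local Open Scope ring_scope.

(* Averaging (sum_i e_i x_i)^(2n) over the 2^k sign vectors e kills every
   multinomial term containing an odd exponent and keeps each even one with
   weight 1, so the left-hand side is 2^-k sum_e (sum_i e_i x_i)^(2n).  The
   two sign vectors e = +-(1,...,1) alone contribute 2 (sum_i x_i)^(2n), and
   all other terms are even powers, hence nonnegative. *)

Definition fcons (T : Type) k (a : T) (g : {ffun 'I_k -> T}) : {ffun 'I_k.+1 -> T} :=
  [ffun i => if unlift ord0 i is Some j then g j else a].
Arguments fcons {T k}.

Lemma fcons0 T k (a : T) (g : {ffun 'I_k -> T}) : fcons a g ord0 = a.
Proof. by rewrite ffunE unlift_none. Qed.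

Lemma fconsS T k (a : T) (g : {ffun 'I_k -> T}) j : fcons a g (lift ord0 j) = g j.
Proof. by rewrite ffunE liftK. Qed.

Lemma big_ffun_recl (R : Type) (idx : R) (op : Monoid.com_law idx) (T : finType) k
    (P : pred {ffun 'I_k.+1 -> T}) (F : {ffun 'I_k.+1 -> T} -> R) :
  \big[op/idx]_(f | P f) F f =
  \big[op/idx]_(a : T) \big[op/idx]_(g | P (fcons a g)) F (fcons a g).
Proof.
rewrite pair_big_dep (reindex (fun p : T * {ffun 'I_k -> T} => fcons p.1 p.2)) //=.
exists (fun f => (f ord0, [ffun j => f (lift ord0 j)])) => [[a g] _|f _] /=.
  by rewrite fcons0; congr pair; apply/ffunP => j; rewrite ffunE fconsS.
by apply/ffunP => i; rewrite ffunE; case: unliftP => [j ->|->]; rewrite ?ffunE.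
Qed.

Lemma dvdn_prod_fact_sum k (a : 'I_k -> nat) : (\prod_i (a i)`! %| (\sum_i a i)`!)%N.
Proof.
elim: k a => [|k IH] a; first by rewrite !big_ord0.
rewrite !big_ord_recr /= -(bin_fact (leq_addr (a ord_max) _)) addKn.
by rewrite dvdn_mull // dvdn_mul.
Qed.

Lemma natr_multinomial (R : numFieldType) k N (a : 'I_k -> nat) :
  (\sum_i a i)%N = N -> (multinomial N a)%:R = N`!%:R / (\prod_i (a i)`!)%:R :> R.
Proof.
move=> <-; rewrite natr_div ?dvdn_prod_fact_sum //.
by rewrite unitfE pnatr_eq0 -lt0n prodn_gt0 // => i; rewrite fact_gt0.
Qed.

Lemma natr_fact_neq0 (R : numDomainType) n : n`!%:R != 0 :> R.
Proof. by rewrite pnatr_eq0 -lt0n fact_gt0. Qed.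

Lemma exprDn_fact (R : numFieldType) (a b : R) N :
  (a + b) ^+ N / N`!%:R =
  \sum_(i < N.+1) a ^+ i / i`!%:R * (b ^+ (N - i) / (N - i)`!%:R).
Proof.
rewrite addrC exprDn mulr_suml; apply: eq_bigr => i _.
have /(congr1 (GRing.natmul (1 : R))) := bin_fact (leq_ord i).
rewrite !natrM => <-.
have C_neq0 : 'C(N, i)%:R != 0 :> R by rewrite pnatr_eq0 -lt0n bin_gt0 -ltnS.
by rewrite -mulr_natr; field; rewrite C_neq0 !natr_fact_neq0.
Qed.

Lemma multinomial_expansion (R : numFieldType) B k N (y : 'I_k -> R) : (N < B)%N ->
  (\sum_i y i) ^+ N / N`!%:R =
  \sum_(f : {ffun 'I_k -> 'I_B} | (\sum_i f i == N)%N) \prod_i (y i ^+ f i / (f i)`!%:R).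
Proof.
elim: k y N => [|k IH] y N ltNB.
  rewrite big_ord0 expr0n; under eq_bigl do rewrite big_ord0.
  case: N ltNB => [|N] _; last by rewrite big_pred0 ?mul0r.
  under eq_bigr do rewrite big_ord0.
  by rewrite fact0 divr1 sumr_const card_ffun !card_ord.
pose y' j := y (lift ord0 j).
have split_head (a : 'I_B) :
  \sum_(g | (\sum_i fcons a g i)%N == N) \prod_i (y i ^+ fcons a g i / (fcons a g i)`!%:R) =
  y ord0 ^+ a / a`!%:R *
  \sum_(g : {ffun 'I_k -> 'I_B} | (a + \sum_i g i == N)%N) \prod_i (y' i ^+ g i / (g i)`!%:R).
  rewrite mulr_sumr; apply: congr_big => [//|g|g _]; rewrite big_ord_recl fcons0.
    by congr (_ + _ == _)%N; apply: eq_bigr => i _; rewrite fconsS.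
  by congr (_ * _); apply: eq_bigr => i _; rewrite fconsS.
rewrite big_ffun_recl (eq_bigr _ (fun a _ => split_head a)).
rewrite (bigID (fun a : 'I_B => a <= N)%N) /= [X in _ + X]big1 ?addr0; last first.
  move=> a; rewrite -ltnNge => ltNa; rewrite big_pred0 ?mulr0 // => g.
  by rewrite eqn_leq leqNgt ltn_addr.
rewrite big_ord_recl exprDn_fact.
rewrite (big_ord_widen _ (fun i => y ord0 ^+ i / i`!%:R *
  ((\sum_j y' j) ^+ (N - i) / (N - i)`!%:R)) ltNB).
apply: congr_big => // a.
rewrite ltnS => leaN; rewrite IH; last exact: leq_ltn_trans (leq_subr _ _) ltNB.
by congr (_ * _); apply: eq_bigl => g; rewrite -(eqn_add2l a) subnKC.
Qed.

Lemma sum_sign_patterns_expr (R : numFieldType) B k N (x : 'I_k -> R) : (N < B)%N ->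
  \sum_(e : {ffun 'I_k -> bool}) (\sum_i (if e i then x i else - x i)) ^+ N =
  2 ^+ k * N`!%:R * \sum_(f : {ffun 'I_k -> 'I_B} | (\sum_i f i == N)%N)
     \prod_i (if odd (f i) then 0 else x i ^+ f i / (f i)`!%:R).
Proof.
move=> ltNB.
have expand (y : 'I_k -> R) : (\sum_i y i) ^+ N =
    N`!%:R * \sum_(f : {ffun 'I_k -> 'I_B} | (\sum_i f i == N)%N)
      \prod_i (y i ^+ f i / (f i)`!%:R).
  by rewrite -multinomial_expansion // mulrC divfK ?natr_fact_neq0.
have sum_signs (f : {ffun 'I_k -> 'I_B}) :
    \sum_(e : {ffun 'I_k -> bool})
      \prod_i ((if e i then x i else - x i) ^+ f i / (f i)`!%:R) =
    2 ^+ k * \prod_i (if odd (f i) then 0 else x i ^+ f i / (f i)`!%:R).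
  rewrite -(bigA_distr_bigA (fun i (b : bool) => (if b then x i else - x i) ^+ f i / (f i)`!%:R)).
  have -> : 2 ^+ k = \prod_(i < k) (2 : R) by rewrite prodr_const card_ord.
  rewrite -big_split; apply: eq_bigr => i _.
  by rewrite big_bool /= exprNn -signr_odd; case: odd => /=; ring.
under eq_bigr do rewrite expand.
by rewrite -mulr_sumr exchange_big /= (eq_bigr _ (fun f _ => sum_signs f)) -mulr_sumr mulrCA mulrA.
Qed.

Lemma sum_even_ffun (R : comPzSemiRingType) k n (G : 'I_k -> nat -> R) :
  \sum_(m : {ffun 'I_k -> 'I_n.+1} | (\sum_i 2 * m i == 2 * n)%N) \prod_i G i (2 * m i)%N =
  \sum_(f : {ffun 'I_k -> 'I_(2 * n).+1} | (\sum_i f i == 2 * n)%N)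
     \prod_i (if odd (f i) then 0 else G i (f i)).
Proof.
rewrite (bigID (fun f : {ffun 'I_k -> 'I_(2 * n).+1} => [forall i, ~~ odd (f i)])) /=.
rewrite [X in _ = _ + X]big1 ?addr0; last first.
  by move=> f /andP[_ /forallPn[i /negPn odd_fi]]; rewrite (bigD1 i) //= odd_fi mul0r.
pose double (m : {ffun 'I_k -> 'I_n.+1}) : {ffun 'I_k -> 'I_(2 * n).+1} :=
  [ffun i => inord (2 * m i)%N].
pose halve (f : {ffun 'I_k -> 'I_(2 * n).+1}) : {ffun 'I_k -> 'I_n.+1} :=
  [ffun i => inord (f i)./2].
have doubleE m i : double m i = (2 * m i)%N :> nat.
  by rewrite ffunE inordK // ltnS leq_mul2l -ltnS ltn_ord.
rewrite (reindex_onto double halve) /=; last first.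
  move=> f /andP[_ /forallP f_even]; apply/ffunP => i; apply: val_inj.
  have le_half_n : ((f i)./2 <= n)%N.
    by apply: leq_trans (half_leq (leq_ord (f i))) _; rewrite /= mul2n half_double.
  rewrite /= doubleE ffunE inordK // mul2n.
  by rewrite -[in RHS](odd_double_half (f i)) (negbTE (f_even i)).
have halveK m : halve (double m) = m.
  by apply/ffunP => i; apply: val_inj; rewrite /= ffunE doubleE mul2n doubleK inordK.
apply: congr_big => [//|m|m _].
  have -> : [forall i, ~~ odd (double m i)] by apply/forallP => i; rewrite doubleE oddM.
  by rewrite halveK eqxx !andbT; congr (_ == _); apply: eq_bigr => i _; rewrite doubleE.
by apply: eq_bigr => i _; rewrite doubleE oddM.
Qed.

Lemma sum_sign_patterns_ge (R : realDomainType) k n (x : 'I_k -> R) : (0 < k)%N ->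
  2 * (\sum_i x i) ^+ (2 * n) <=
  \sum_(e : {ffun 'I_k -> bool}) (\sum_i (if e i then x i else - x i)) ^+ (2 * n).
Proof.
move=> k_gt0; have even_pow_ge0 (y : R) : 0 <= y ^+ (2 * n) by rewrite exprM exprn_ge0 ?sqr_ge0.
have true_neq_false : [ffun=> true] != [ffun=> false] :> {ffun 'I_k -> bool}.
  by apply/eqP => /ffunP/(_ (Ordinal k_gt0)); rewrite !ffunE.
have sum_true : \sum_i (if [ffun=> true] i then x i else - x i) = \sum_i x i.
  by apply: eq_bigr => i _; rewrite ffunE.
have sum_false : \sum_i (if [ffun=> false] i then x i else - x i) = - \sum_i x i.
  by rewrite -sumrN; apply: eq_bigr => i _; rewrite ffunE.
rewrite (bigD1 [ffun=> true]) // (bigD1 [ffun=> false]) 1?eq_sym //= sum_true sum_false.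
rewrite [(- _) ^+ _]exprM sqrrN -exprM.
by rewrite mulr_natl mulr2n lerD2l lerDl sumr_ge0.
Qed.

Theorem lemma9 (R : realFieldType) (k n : nat) (x : 'I_k -> R)
  (hk : (0 < k)%N) (hx : forall i, 0 <= x i) :
  \sum_(m : {ffun 'I_k -> 'I_n.+1} | (\sum_(i < k) (2 * m i) == 2 * n)%N)
     (multinomial (2 * n) (fun i => (2 * m i)%N))%:R
       * \prod_(i < k) x i ^+ (2 * m i)
  >= (2%:R ^+ k.-1)^-1 * (\sum_(i < k) x i) ^+ (2 * n).
Proof.
set T := \sum_(e : {ffun 'I_k -> bool}) (\sum_i (if e i then x i else - x i)) ^+ (2 * n).
rewrite [leRHS](_ : _ = (2 ^+ k)^-1 * T).
  have -> : (2 : R) ^+ k = 2 * 2 ^+ k.-1 by rewrite -exprS prednK.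
  rewrite invfM [2^-1 * _]mulrC -mulrA ler_pM2l ?invr_gt0 ?exprn_gt0 //.
  by rewrite ler_pdivlMl // sum_sign_patterns_ge.
rewrite /T (sum_sign_patterns_expr _ (2 * n).+1) //.
rewrite -(sum_even_ffun _ _ _ (fun i j => x i ^+ j / j`!%:R)).
rewrite mulrA mulKf ?expf_neq0 ?pnatr_eq0 // mulr_sumr.
apply: eq_bigr => m /eqP sum_m.
by rewrite natr_multinomial // natr_prod prodf_div mulrAC mulrA.
Qed.
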